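(* In the calculus $\lambda^{RE}$ described in the context: if $e_1\Rrightarrow e_2$, then there exists $e_1'$ such that $e_1\to^*e_1'$ and $e_1'\cong e_2$.
   Context: Syntax of $\lambda^{RE}$. Basic types $b ::= \mathsf{Bool}\mid\mathsf{Unit}$. Constants $c ::= \mathsf{true}\mid\mathsf{false}\mid\mathsf{unit}\mid (=_b)\mid (=_{(c,b)})$. Expressions $e ::= c\mid x\mid e\ e\mid \lambda x{:}\tau.\,e\mid \mathsf{BEq}_b\ e\ e\ e\mid \mathsf{XEq}_{x:\tau\to\tau}\ e\ e\ e$. Values $v ::= c\mid \lambda x{:}\tau.\,e\mid \mathsf{BEq}_b\ e\ e\ v\mid \mathsf{XEq}_{x:\tau\to\tau}\ e\ e\ v$. Types $\tau ::= \{x{:}b\mid e\}\mid x{:}\tau\to\tau\mid \mathsf{PEq}_{\tau}\{e\}\{e\}$. $e[x:=e']$ is capture-avoiding substitution. Reduction: evaluation contexts $E ::= \bullet\mid E\ e\mid v\ E\mid \mathsf{BEq}_b\ e\ e\ E\mid\mathsf{XEq}_{x:\tau\to\tau}\ e\ e\ E$; $E[e]\to E[e']$ if $e\to e'$; $(\lambda x{:}\tau.\,e)\ v\to e[x:=v]$; $(=_b)\ c_1\to(=_{(c_1,b)})$; $(=_{(c_1,b)})\ c_2\to\mathsf{true}$ if $c_1,c_2$ syntactically equal, else $\to\mathsf{false}$. $\to^*$ is the reflexive–transitive closure. Parallel reduction $e\Rrightarrow e'$ and $\tau\Rrightarrow\tau'$ is defined inductively: $x\Rrightarrow x$; $c\Rrightarrow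 c$; $\lambda x{:}\tau.e\Rrightarrow\lambda x{:}\tau'.e'$ if $\tau\Rrightarrow\tau'$, $e\Rrightarrow e'$; $e_1\ e_2\Rrightarrow e_1'\ e_2'$ if $e_i\Rrightarrow e_i'$; $(\lambda x{:}\tau.e)\ v\Rrightarrow e'[x:=v']$ if $e\Rrightarrow e'$ and $v\Rrightarrow v'$; $(=_b)\ c_1\Rrightarrow(=_{(c_1,b)})$; $(=_{(c_1,b)})\ c_2\Rrightarrow d$ where $d=\mathsf{true}$ if $c_1,c_2$ are syntactically equal and $\mathsf{false}$ otherwise; $\mathsf{BEq}_b\ e_l\ e_r\ e\Rrightarrow\mathsf{BEq}_b\ e_l'\ e_r'\ e'$ if $e_l\Rrightarrow e_l'$, $e_r\Rrightarrow e_r'$, $e\Rrightarrow e'$; $\mathsf{XEq}_{x:\tau_x\to\tau}\ e_l\ e_r\ e\Rrightarrow\mathsf{XEq}_{x:\tau_x'\to\tau'}\ e_l'\ e_r'\ e'$ if all five components parallel reduce; on types: $\{x{:}b\mid r\}\Rrightarrow\{x{:}b\mid r'\}$ if $r\Rrightarrow r'$; $x{:}\tau_x\to\tau\Rrightarrow x{:}\tau_x'\to\tau'$ if $\tau_x\Rrightarrow\tau_x'$, $\tau\Rrightarrow\tau'$; $\mathsf{PEq}_\tau\{e_l\}\{e_r\}\Rrightarrow\mathsf{PEq}_{\tau'}\{e_l'\}\{e_r'\}$ if all components parallel reduce. Congruence $e\cong e'$ (same outermost constructor, subparts related by parallel reduction): $x\cong x$; $c\cong c$; $\lambda x{:}\tau.e\cong\lambda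 x{:}\tau'.e'$ if $\tau\Rrightarrow\tau'$, $e\Rrightarrow e'$; $e_1\ e_2\cong e_1'\ e_2'$ if $e_1\Rrightarrow e_1'$, $e_2\Rrightarrow e_2'$; $\mathsf{BEq}_b\ e_l\ e_r\ e\cong\mathsf{BEq}_b\ e_l'\ e_r'\ e'$ if $e_l\Rrightarrow e_l'$, $e_r\Rrightarrow e_r'$, $e\Rrightarrow e'$; $\mathsf{XEq}_{x:\tau_x\to\tau}\ e_l\ e_r\ e\cong\mathsf{XEq}_{x:\tau_x'\to\tau'}\ e_l'\ e_r'\ e'$ if all five components parallel reduce. *)

From Stdlib Require Import Arith PeanoNat.

Inductive basety : Type := TBool | TUnit.

(* c ::= true | false | unit | (=_b) | (=_(c,b)) *)
Inductive const : Type :=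
  | CTrue | CFalse | CUnit
  | CEq (b : basety)
  | CEqc (c : const) (b : basety).

(* Binding structure (de Bruijn index 0 = the bound x):
   - Lam t e        : lambda x:t. e          (x bound in e)
   - TRef b r       : {x:b | r}              (x bound in r)
   - TArr tx t      : x:tx -> t              (x bound in t)
   - XEq tx t el er e : XEq_{x:tx -> t} el er e  (x bound in t only) *)
Inductive expr : Type :=
  | Const (c : const)
  | Var (n : nat)
  | App (e1 e2 : expr)
  | Lam (t : ty) (e : expr)
  | BEq (b : basety) (el er e : expr)
  | XEq (tx t : ty) (el er e : expr)
with ty : Type :=
  | TRef (b : basety) (r : expr)
  | TArr (tx t : ty)
  | TPEq (t : ty) (el er : expr).

Inductive value : expr -> Prop :=
  | VConst c : value (Const c)
  | VLam t e : value (Lam t e)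
  | VBEq b el er v : value v -> value (BEq b el er v)
  | VXEq tx t el er v : value v -> value (XEq tx t el er v).

Fixpoint lift_e (k : nat) (e : expr) : expr :=
  match e with
  | Const c => Const c
  | Var n => if n <? k then Var n else Var (S n)
  | App e1 e2 => App (lift_e k e1) (lift_e k e2)
  | Lam t e => Lam (lift_t k t) (lift_e (S k) e)
  | BEq b el er e => BEq b (lift_e k el) (lift_e k er) (lift_e k e)
  | XEq tx t el er e =>
      XEq (lift_t k tx) (lift_t (S k) t) (lift_e k el) (lift_e k er) (lift_e k e)
  end
with lift_t (k : nat) (t : ty) : ty :=
  match t with
  | TRef b r => TRef b (lift_e (S k) r)
  | TArr tx t => TArr (lift_t k tx) (lift_t (S k) t)
  | TPEq t el er => TPEq (lift_t k t) (lift_e k el) (lift_e k er)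
  end.

Fixpoint subst_e (j : nat) (s : expr) (e : expr) : expr :=
  match e with
  | Const c => Const c
  | Var n => if n =? j then s else if j <? n then Var (pred n) else Var n
  | App e1 e2 => App (subst_e j s e1) (subst_e j s e2)
  | Lam t e => Lam (subst_t j s t) (subst_e (S j) (lift_e 0 s) e)
  | BEq b el er e => BEq b (subst_e j s el) (subst_e j s er) (subst_e j s e)
  | XEq tx t el er e =>
      XEq (subst_t j s tx) (subst_t (S j) (lift_e 0 s) t)
          (subst_e j s el) (subst_e j s er) (subst_e j s e)
  end
with subst_t (j : nat) (s : expr) (t : ty) : ty :=
  match t with
  | TRef b r => TRef b (subst_e (S j) (lift_e 0 s) r)
  | TArr tx t => TArr (subst_t j s tx) (subst_t (S j) (lift_e 0 s) t)
  | TPEq t el er => TPEq (subst_t j s t) (subst_e j s el) (subst_e j s er)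
  end.

Definition subst0 (v e : expr) : expr := subst_e 0 v e.

(* Small-step reduction; the context rules are the closure under
   E ::= [] | E e | v E | BEq_b e e E | XEq_{x:t->t} e e E *)
Inductive step : expr -> expr -> Prop :=
  | S_AppL e1 e1' e2 : step e1 e1' -> step (App e1 e2) (App e1' e2)
  | S_AppR v e2 e2' : value v -> step e2 e2' -> step (App v e2) (App v e2')
  | S_BEq b el er e e' : step e e' -> step (BEq b el er e) (BEq b el er e')
  | S_XEq tx t el er e e' : step e e' -> step (XEq tx t el er e) (XEq tx t el er e')
  | S_Beta t e v : value v -> step (App (Lam t e) v) (subst0 v e)
  | S_Eq1 b c1 : step (App (Const (CEq b)) (Const c1)) (Const (CEqc c1 b))
  | S_Eq2T c1 b c2 : c1 = c2 ->
      step (App (Const (CEqc c1 b)) (Const c2)) (Const CTrue)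
  | S_Eq2F c1 b c2 : c1 <> c2 ->
      step (App (Const (CEqc c1 b)) (Const c2)) (Const CFalse).

Inductive steps : expr -> expr -> Prop :=
  | steps_refl e : steps e e
  | steps_step e1 e2 e3 : step e1 e2 -> steps e2 e3 -> steps e1 e3.

Inductive par_e : expr -> expr -> Prop :=
  | P_Var x : par_e (Var x) (Var x)
  | P_Const c : par_e (Const c) (Const c)
  | P_Lam t t' e e' : par_t t t' -> par_e e e' -> par_e (Lam t e) (Lam t' e')
  | P_App e1 e1' e2 e2' : par_e e1 e1' -> par_e e2 e2' -> par_e (App e1 e2) (App e1' e2')
  | P_Beta t e e' v v' : value v -> par_e e e' -> par_e v v' ->
      par_e (App (Lam t e) v) (subst0 v' e')
  | P_Eq1 b c1 : par_e (App (Const (CEq b)) (Const c1)) (Const (CEqc c1 b))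
  | P_Eq2T c1 b c2 : c1 = c2 ->
      par_e (App (Const (CEqc c1 b)) (Const c2)) (Const CTrue)
  | P_Eq2F c1 b c2 : c1 <> c2 ->
      par_e (App (Const (CEqc c1 b)) (Const c2)) (Const CFalse)
  | P_BEq b el el' er er' e e' : par_e el el' -> par_e er er' -> par_e e e' ->
      par_e (BEq b el er e) (BEq b el' er' e')
  | P_XEq tx tx' t t' el el' er er' e e' :
      par_t tx tx' -> par_t t t' -> par_e el el' -> par_e er er' -> par_e e e' ->
      par_e (XEq tx t el er e) (XEq tx' t' el' er' e')
with par_t : ty -> ty -> Prop :=
  | P_TRef b r r' : par_e r r' -> par_t (TRef b r) (TRef b r')
  | P_TArr tx tx' t t' : par_t tx tx' -> par_t t t' -> par_t (TArr tx t) (TArr tx' t')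
  | P_TPEq t t' el el' er er' : par_t t t' -> par_e el el' -> par_e er er' ->
      par_t (TPEq t el er) (TPEq t' el' er').

Inductive cong : expr -> expr -> Prop :=
  | C_Var x : cong (Var x) (Var x)
  | C_Const c : cong (Const c) (Const c)
  | C_Lam t t' e e' : par_t t t' -> par_e e e' -> cong (Lam t e) (Lam t' e')
  | C_App e1 e1' e2 e2' : par_e e1 e1' -> par_e e2 e2' -> cong (App e1 e2) (App e1' e2')
  | C_BEq b el el' er er' e e' : par_e el el' -> par_e er er' -> par_e e e' ->
      cong (BEq b el er e) (BEq b el' er' e')
  | C_XEq tx tx' t t' el el' er er' e e' :
      par_t tx tx' -> par_t t t' -> par_e el el' -> par_e er er' -> par_e e e' ->
      cong (XEq tx t el er e) (XEq tx' t' el' er' e').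

(* A parallel step e1 ⇛ e2 is simulated by small steps that only contract the
   redexes which parallel reduction fires at the root: congruence cases need no
   step at all, and the equality constants take one step.  For a β-redex
   (λx:τ.e) v ⇛ e'[x:=v'] the argument v is a value, so it cannot step and the
   induction hypothesis yields v ≅ v' directly; the body's reduction e →* e0
   with e0 ≅ e' is carried through the β-step because →* is stable under
   substitution, and ≅ is stable under substituting v, v' for x. *)

From Stdlib Require Import Arith Lia.

Scheme expr_mind := Induction for expr Sort Prop
  with ty_mind := Induction for ty Sort Prop.
Combined Scheme expr_ty_mind from expr_mind, ty_mind.

Scheme par_e_mind := Induction for par_e Sort Prop
  with par_t_mind := Induction for par_t Sort Prop.
Combined Scheme par_mind from par_e_mind, par_t_mind.

Ltac index_cases :=
  repeat (cbn [lift_e subst_e pred]; match goal with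
    | |- context [?a <? ?b] => destruct (Nat.ltb_spec a b)
    | |- context [?a =? ?b] => destruct (Nat.eqb_spec a b)
    end);
  try (exfalso; lia); try reflexivity; try (f_equal; lia).

Lemma lift_lift :
  (forall e j k, j <= k -> lift_e (S k) (lift_e j e) = lift_e j (lift_e k e)) /\
  (forall t j k, j <= k -> lift_t (S k) (lift_t j t) = lift_t j (lift_t k t)).
Proof.
  apply expr_ty_mind; intros; simpl; try index_cases;
    f_equal; auto; match goal with IH : _ |- _ => apply IH; lia end.
Qed.

Lemma lift_lift0 s k : lift_e (S k) (lift_e 0 s) = lift_e 0 (lift_e k s).
Proof. apply lift_lift; lia. Qed.

Lemma subst_lift :
  (forall e k s, subst_e k s (lift_e k e) = e) /\
  (forall t k s, subst_t k s (lift_t k t) = t).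
Proof. apply expr_ty_mind; intros; simpl; try index_cases; f_equal; auto. Qed.

Ltac binder_case IH :=
  rewrite IH by lia; rewrite lift_lift0; reflexivity.

Lemma lift_subst_below :
  (forall e j k s, j <= k ->
     lift_e k (subst_e j s e) = subst_e j (lift_e k s) (lift_e (S k) e)) /\
  (forall t j k s, j <= k ->
     lift_t k (subst_t j s t) = subst_t j (lift_e k s) (lift_t (S k) t)).
Proof.
  apply expr_ty_mind; intros; simpl; try index_cases; f_equal; auto;
    match goal with IH : _ |- _ => binder_case IH end.
Qed.

Lemma lift_subst_above :
  (forall e j k s, k <= j ->
     lift_e k (subst_e j s e) = subst_e (S j) (lift_e k s) (lift_e k e)) /\
  (forall t j k s, k <= j ->
     lift_t k (subst_t j s t) = subst_t (S j) (lift_e k s) (lift_t k t)).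
Proof.
  apply expr_ty_mind; intros; simpl; try index_cases; f_equal; auto;
    match goal with IH : _ |- _ => binder_case IH end.
Qed.

Lemma subst_subst :
  (forall e i j s v, i <= j ->
     subst_e j s (subst_e i v e) = subst_e i (subst_e j s v) (subst_e (S j) (lift_e i s) e)) /\
  (forall t i j s v, i <= j ->
     subst_t j s (subst_t i v t) = subst_t i (subst_e j s v) (subst_t (S j) (lift_e i s) t)).
Proof.
  apply expr_ty_mind; intros; simpl.
  2: { index_cases. symmetry; apply subst_lift. }
  all: f_equal; auto;
    match goal with IH : _ |- _ =>
      rewrite IH, lift_lift0, (proj1 lift_subst_above) by lia; reflexivity end.
Qed.

Lemma subst_subst0 j s v e :
  subst_e j s (subst0 v e) = subst0 (subst_e j s v) (subst_e (S j) (lift_e 0 s) e).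
Proof. apply subst_subst; lia. Qed.

Lemma lift_subst0 k v e :
  lift_e k (subst0 v e) = subst0 (lift_e k v) (lift_e (S k) e).
Proof. apply lift_subst_below; lia. Qed.

Lemma value_lift v k : value v -> value (lift_e k v).
Proof. induction 1; simpl; constructor; auto. Qed.

Lemma value_subst v j s : value v -> value (subst_e j s v).
Proof. induction 1; simpl; constructor; auto. Qed.

Lemma value_irreducible v w : value v -> ~ step v w.
Proof.
  intros Hv; revert w; induction Hv; intros w Hs; inversion Hs; subst; eapply IHHv; eassumption.
Qed.

Lemma steps_value v w : value v -> steps v w -> w = v.
Proof.
  intros Hv Hs; destruct Hs as [|v u w Hvu _]; [reflexivity|].
  exfalso; exact (value_irreducible _ _ Hv Hvu).
Qed.

Lemma steps_one a b : step a b -> steps a b.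
Proof. intros H; econstructor; [exact H | constructor]. Qed.

Lemma step_subst x y j s : step x y -> step (subst_e j s x) (subst_e j s y).
Proof.
  intros H; revert j s; induction H; intros; simpl; try (constructor; auto; fail).
  - constructor; auto using value_subst.
  - rewrite subst_subst0; constructor; auto using value_subst.
Qed.

Lemma steps_subst x y j s : steps x y -> steps (subst_e j s x) (subst_e j s y).
Proof. induction 1; econstructor; eauto using step_subst. Qed.

Lemma steps_beta t e e0 v : value v -> steps e e0 -> steps (App (Lam t e) v) (subst0 v e0).
Proof. intros Hv He; econstructor; [apply S_Beta, Hv | apply steps_subst, He]. Qed.

Lemma par_lift :
  (forall x x', par_e x x' -> forall k, par_e (lift_e k x) (lift_e k x')) /\
  (forall t t', par_t t t' -> forall k, par_t (lift_t k t) (lift_t k t')).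
Proof.
  apply par_mind; intros; simpl; try (constructor; auto; fail).
  - destruct (x <? k); constructor.
  - rewrite lift_subst0; constructor; auto using value_lift.
Qed.

Lemma par_subst :
  (forall x x', par_e x x' -> forall j s s', par_e s s' ->
      par_e (subst_e j s x) (subst_e j s' x')) /\
  (forall t t', par_t t t' -> forall j s s', par_e s s' ->
      par_t (subst_t j s t) (subst_t j s' t')).
Proof.
  pose proof (proj1 par_lift) as par_e_lift.
  apply par_mind; intros; simpl;
    try rewrite subst_subst0;
    try (constructor; auto using value_subst; fail).
  destruct (x =? j); auto; destruct (j <? x); constructor.
Qed.

Lemma cong_par a b : cong a b -> par_e a b.
Proof. destruct 1; constructor; auto. Qed.

Lemma cong_subst a a' j s s' : cong a a' -> cong s s' ->
  cong (subst_e j s a) (subst_e j s' a').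
Proof.
  intros Ha Hs; pose proof (cong_par _ _ Hs) as Hpar.
  pose proof (proj1 par_lift) as par_e_lift.
  destruct par_subst as [par_e_subst par_t_subst].
  destruct Ha; simpl; try (constructor; auto; fail).
  destruct (x =? j); auto; destruct (j <? x); constructor.
Qed.

Theorem lemmaC11 : forall e1 e2 : expr,
  par_e e1 e2 -> exists e1' : expr, steps e1 e1' /\ cong e1' e2.
Proof.
  induction 1 as [| | | | t e e' v v' Hv _ IH_e _ IH_v | | | | |];
    try (eexists; split; [apply steps_refl | constructor; auto]; fail);
    try (eexists; split; [apply steps_one; constructor; auto | constructor]; fail).
  destruct IH_e as [e0 [He0 Hcong_e]], IH_v as [v0 [Hv0 Hcong_v]].
  rewrite (steps_value _ _ Hv Hv0) in Hcong_v.
  exists (subst0 v e0); split.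
  - apply steps_beta; assumption.
  - apply cong_subst; assumption.
Qed.
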